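(* Let $R$ be a nonzero commutative ring which is not a field, let $n\ge2$, and let $K$ be a field. Then $\mathrm{St}^K_n(R)$ is not irreducible as a $\mathrm{GL}_n(R)$-representation.
   Context: A flag in $R^n$ is a chain $0\subsetneq V_1\subsetneq\cdots\subsetneq V_k\subsetneq R^n$ of free direct summands; complete if $k=n-1$, good if a subflag of a complete flag. The Tits complex $\mathcal{T}_n(R)$ has vertices the direct summands $V$ of $R^n$, $0\ne V\ne R^n$, with $V$ and $R^n/V$ free, and a $k$-simplex for every good flag with $k+1$ terms; $\mathrm{GL}_n(R)$ acts on it simplicially. $\mathrm{St}^K_n(R)=\tilde H_{n-2}(\mathcal{T}_n(R);K)$ with the induced $\mathrm{GL}_n(R)$-action. *)

From HB Require Import structures.
From mathcomp Require Import all_boot all_order all_algebra.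
From mathcomp Require Import boolp classical_sets.
Set Implicit Arguments. Unset Strict Implicit. Unset Printing Implicit Defensive.
Import GRing.Theory.
Local Open Scope classical_set_scope.
Local Open Scope ring_scope.

(* R^n is the module of row vectors 'rV[R]_n; submodules are classical sets
   of row vectors (equality of sets is extensional by boolp's axioms, and
   [set T] carries the classical eqType structure of boolp). *)

Section Tits.
Variables (R : comNzRingType) (n : nat).

Definition subm := set 'rV[R]_n.
Definition flag := seq subm.

Definition is_submod (V : subm) : Prop :=
  V 0 /\ (forall x y, V x -> V y -> V (x + y)) /\ (forall (a : R) x, V x -> V (a *: x)).

Definition is_free (V : subm) : Prop :=
  exists k (b : 'M[R]_(k, n)),
    (forall v, V v <-> exists u : 'rV[R]_k, v = u *m b) /\
    (forall u : 'rV[R]_k, u *m b = 0 -> u = 0).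

Definition is_dsummand (V : subm) : Prop :=
  is_submod V /\ exists W : subm, is_submod W /\
    (forall x, V x -> W x -> x = 0) /\
    (forall x, exists y z, V y /\ W z /\ x = y + z).

(* R^n / V is free: the images of the rows of some k x n matrix c form a
   basis of the quotient module R^n / V *)
Definition quot_free (V : subm) : Prop :=
  exists k (c : 'M[R]_(k, n)),
    (forall x, exists u : 'rV[R]_k, V (x - u *m c)) /\
    (forall u : 'rV[R]_k, V (u *m c) -> u = 0).

Definition free_dsummand (V : subm) : Prop := is_dsummand V /\ is_free V.

Definition tits_vertex (V : subm) : Prop :=
  is_dsummand V /\ is_free V /\ quot_free V /\ V <> [set 0] /\ V <> setT.

Definition strict_sub (V W : subm) : Prop := V `<=` W /\ V <> W.

Definition is_flag (s : flag) : Prop :=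
  (forall V, V \in s -> free_dsummand V) /\
  (forall i, (i.+1 < size s)%N -> strict_sub (nth set0 s i) (nth set0 s i.+1)) /\
  (forall V, V \in s -> strict_sub [set 0] V /\ strict_sub V setT).

Definition complete_flag (s : flag) : Prop := is_flag s /\ size s = n.-1.

Definition good_flag (s : flag) : Prop :=
  is_flag s /\ exists t, complete_flag t /\ subseq s t.

(* k-simplices: good flags with k+1 terms.  The empty flag is used as the
   unique (-1)-simplex, which yields the augmented (reduced) chain complex. *)
Definition simplex (d : nat) (s : flag) : Prop :=
  good_flag s /\ size s = d.+1.

Variable K : fieldType.

Definition chain (d : nat) (c : flag -> K) : Prop :=
  (exists s : seq flag, forall σ, c σ != 0 -> σ \in s) /\
  (forall σ, c σ != 0 -> simplex d σ).

Definition face (i : nat) (σ : flag) : flag := take i σ ++ drop i.+1 σ.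

Definition boundary_is (c f : flag -> K) : Prop :=
  exists s : seq flag, uniq s /\ (forall σ, c σ != 0 -> σ \in s) /\
    forall τ, f τ = \sum_(σ <- s) \sum_(i < size σ)
                      (if face i σ == τ then (-1) ^+ i * c σ else 0).

Definition cycle (d : nat) (f : flag -> K) : Prop :=
  chain d f /\ boundary_is f (fun _ => 0).
Definition bdry (d : nat) (f : flag -> K) : Prop :=
  exists c, chain d.+1 c /\ boundary_is c f.

(* GL_n(R), acting on R^n by v |-> v *m g *)
Definition GLn (g : 'M[R]_n) : Prop :=
  exists h : 'M[R]_n, g *m h = 1%:M /\ h *m g = 1%:M.

Definition act_flag (g : 'M[R]_n) (σ : flag) : flag :=
  map (fun V : subm => [set v *m g | v in V]) σ.

(* induced action on chains (f |-> f o g^{-1}); invariance under the whole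
   group is stated equivalently with f o g for all g in GL_n(R) *)
Definition invariant (W : set (flag -> K)) : Prop :=
  forall g f, GLn g -> W f -> W (fun σ => f (act_flag g σ)).

Definition ksubspace (W : set (flag -> K)) : Prop :=
  W (fun _ => 0) /\ (forall f h, W f -> W h -> W (fun σ => f σ + h σ)) /\
  (forall (a : K) f, W f -> W (fun σ => a * f σ)).

(* St^K_n(R) = H~_{n-2}(T_n(R); K) = Z_{n-2} / B_{n-2}.  It is irreducible
   as a GL_n(R)-representation iff it is nonzero and its only invariant
   subspaces are 0 and itself; subrepresentations of Z/B correspond to
   GL_n(R)-invariant K-subspaces W with B <= W <= Z. *)
Definition steinberg_irreducible : Prop :=
  (exists f, cycle n.-2 f /\ ~ bdry n.-2 f) /\
  forall W : set (flag -> K), ksubspace W -> invariant W ->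
    (forall f, bdry n.-2 f -> W f) -> (forall f, W f -> cycle n.-2 f) ->
    (forall f, W f -> bdry n.-2 f) \/ (forall f, cycle n.-2 f -> W f).

End Tits.

Definition not_field (R : comNzRingType) : Prop :=
  exists x : R, x != 0 /\ ~ exists y : R, x * y = 1.

From Pilot Require Import Defs.
From mathcomp Require Import all_boot all_order all_algebra all_fingroup zify.
From mathcomp Require Import boolp classical_sets.
Set Implicit Arguments. Unset Strict Implicit. Unset Printing Implicit Defensive.
Import GRing.Theory.
Local Open Scope classical_set_scope.
Local Open Scope ring_scope.

(* Since no good flag has n terms, there are no boundaries in degree n-2 and
   St^K_n(R) is the space of (n-2)-cycles.  Fix a nonzero non-unit x and let
   Gamma be the group of invertible matrices of the form 1 + x M; it is normal
   in GL_n(R), so the cycles whose coefficients sum to zero on every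
   Gamma-orbit of complete flags form a GL_n(R)-invariant subspace W.  The
   apartment class, the signed sum of the coordinate flags, is a cycle outside
   W: two distinct coordinate flags are never Gamma-equivalent, because the
   diagonal entries 1 + x M_jj of a matrix in Gamma cannot vanish.  On the
   other hand, for the transvection t = 1 + x E_01 in Gamma, the apartment
   class minus its t-translate lies in W and is nonzero at the standard flag.
   Hence 0 <> W <> St. *)

Definition supported (T : eqType) (V : nmodType) (F : T -> V) (s : seq T) :=
  forall x, F x != 0 -> x \in s.

Lemma big_supported_eq (T : eqType) (V : nmodType) (P : pred T) (F : T -> V) s1 s2 :
  uniq s1 -> uniq s2 -> supported F s1 -> supported F s2 ->
  \sum_(x <- s1 | P x) F x = \sum_(x <- s2 | P x) F x.
Proof.
move=> u1 u2 F1 F2; apply: perm_big_supp; apply: uniq_perm; rewrite ?filter_uniq //.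
by move=> x; rewrite !mem_filter; case: (F x =P 0) => //= /eqP/[dup]/F1-> /F2->.
Qed.

Lemma supported_sub (T : eqType) (V W : nmodType) (F : T -> V) (G : T -> W) s :
  (forall x, G x != 0 -> F x != 0) -> supported F s -> supported G s.
Proof. by move=> GF Fs x /GF/Fs. Qed.

Lemma supportedD (T : eqType) (V : nmodType) (F G : T -> V) s1 s2 :
  supported F s1 -> supported G s2 -> supported (fun x => F x + G x) (undup (s1 ++ s2)).
Proof.
move=> F1 G2 x; rewrite mem_undup mem_cat.
by case: (eqVneq (F x) 0) => [->|/F1->//]; rewrite add0r => /G2->; rewrite orbT.
Qed.

Lemma supportedB (T : eqType) (V : zmodType) (F G : T -> V) s1 s2 :
  supported F s1 -> supported G s2 -> supported (fun x => F x - G x) (undup (s1 ++ s2)).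
Proof.
move=> F1 G2; apply: supportedD F1 _.
by apply: supported_sub G2 => x; rewrite oppr_eq0.
Qed.

Lemma supported_undup_catl (T : eqType) (V : nmodType) (F : T -> V) s1 s2 :
  supported F s1 -> supported F (undup (s1 ++ s2)).
Proof. by move=> F1 x /F1; rewrite mem_undup mem_cat => ->. Qed.

Lemma supported_undup_catr (T : eqType) (V : nmodType) (F : T -> V) s1 s2 :
  supported F s2 -> supported F (undup (s1 ++ s2)).
Proof. by move=> F2 x /F2; rewrite mem_undup mem_cat orbC => ->. Qed.

Lemma eq_take_drop_succ (T : Type) (x0 : T) (s s' : seq T) i :
  size s = size s' -> (forall k, k != i -> nth x0 s k = nth x0 s' k) ->
  take i s ++ drop i.+1 s = take i s' ++ drop i.+1 s'.
Proof.
move=> Es E; congr (_ ++ _); apply: (@eq_from_nth _ x0).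
- by rewrite !size_take Es.
- move=> k; rewrite size_take => lt.
  have ki : (k < i)%N by move: lt; case: ifP; lia.
  by rewrite !nth_take // E // neq_ltn ki.
- by rewrite !size_drop Es.
by move=> k _; rewrite !nth_drop E //; lia.
Qed.

Section FlagAction.
Variables (R : comNzRingType) (n : nat).
Implicit Types (V W : subm R n) (g h : 'M[R]_n) (σ : flag R n).

Lemma act_flagM g1 g2 σ : act_flag g2 (act_flag g1 σ) = act_flag (g1 *m g2) σ.
Proof.
rewrite /act_flag -map_comp; apply: eq_map => V /=; apply/seteqP; split => y /=.
  by case=> _ [v Vv <-] <-; exists v; rewrite ?mulmxA.
by case=> v Vv <-; exists (v *m g1); [exists v|rewrite mulmxA].
Qed.

Lemma act_flag1 σ : act_flag 1%:M σ = σ.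
Proof.
rewrite /act_flag -[RHS]map_id; apply: eq_map => V; apply/seteqP; split => y /=.
  by case=> v Vv <-; rewrite mulmx1.
by move=> Vy; exists y; rewrite ?mulmx1.
Qed.

Lemma face_act g i σ : face i (act_flag g σ) = act_flag g (face i σ).
Proof. by rewrite /face /act_flag map_cat map_take map_drop. Qed.

Definition preimage_mx h V : subm R n := [set y | V (y *m h)].

Section Invertible.
Variables (g h : 'M[R]_n).
Hypotheses (gh : g *m h = 1%:M) (hg : h *m g = 1%:M).

Lemma act_flagK : cancel (act_flag g) (act_flag h).
Proof. by move=> σ; rewrite act_flagM gh act_flag1. Qed.

Lemma act_flag_inj : injective (act_flag g).
Proof. exact: can_inj act_flagK. Qed.

Lemma image_mx_preimage V : [set v *m g | v in V] = preimage_mx h V.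
Proof.
apply/seteqP; split => y; rewrite /preimage_mx /=.
  by case=> v Vv <-; rewrite -mulmxA gh mulmx1.
by move=> Vy; exists (y *m h) => //; rewrite -mulmxA hg mulmx1.
Qed.

Lemma act_flag_preimage σ : act_flag g σ = map (preimage_mx h) σ.
Proof. exact/eq_map/image_mx_preimage. Qed.

Lemma preimage_mxK : cancel (preimage_mx h) (preimage_mx g).
Proof. by move=> V; apply/seteqP; split => y; rewrite /preimage_mx /= -mulmxA gh mulmx1. Qed.

Lemma preimage_mx0 : preimage_mx h [set 0] = [set 0].
Proof.
apply/seteqP; split=> y; rewrite /preimage_mx /=; last by move->; rewrite mul0mx.
by move=> E; rewrite -[y]mulmx1 -hg mulmxA E mul0mx.
Qed.

Lemma preimage_mxT : preimage_mx h setT = setT.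
Proof. by apply/seteqP; split => y. Qed.

Lemma preimage_submod V : is_submod V -> is_submod (preimage_mx h V).
Proof.
case=> V0 [VD VZ]; split; first by rewrite /preimage_mx /= mul0mx.
split; first by move=> u v; rewrite /preimage_mx /= mulmxDl; apply: VD.
by move=> a v; rewrite /preimage_mx /= -scalemxAl; apply: VZ.
Qed.

Lemma preimage_dsummand V : is_dsummand V -> is_dsummand (preimage_mx h V).
Proof.
case=> sV [W [sW [cap sum]]]; split; first exact: preimage_submod.
exists (preimage_mx h W); split; first exact: preimage_submod.
split=> [v Vv Wv|v].
  by rewrite -[v]mulmx1 -hg mulmxA (cap _ Vv Wv) mul0mx.
have [y [z [Vy [Wz E]]]] := sum (v *m h).
exists (y *m g), (z *m g); rewrite /preimage_mx /= -!mulmxA !gh !mulmx1.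
by do 2!split=> //; rewrite -mulmxDl -E -mulmxA hg mulmx1.
Qed.

Lemma preimage_free V : is_free V -> is_free (preimage_mx h V).
Proof.
case=> k [b [bV bi]]; exists k, (b *m g); split=> [v|u E].
  rewrite /preimage_mx /= bV; split=> -[u E]; exists u.
    by rewrite mulmxA -E -mulmxA hg mulmx1.
  by rewrite E -!mulmxA gh mulmx1.
by apply: bi; rewrite -[u *m b]mulmx1 -gh mulmxA -(mulmxA u) E mul0mx.
Qed.

Lemma preimage_strict V W : strict_sub V W -> strict_sub (preimage_mx h V) (preimage_mx h W).
Proof.
case=> VW NVW; split=> [y|E]; first exact: VW.
by apply: NVW; rewrite -(preimage_mxK V) E preimage_mxK.
Qed.

Lemma act_is_flag σ : is_flag σ -> is_flag (act_flag g σ).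
Proof.
rewrite act_flag_preimage => -[F [S B]]; split.
  by move=> _ /mapP[V /F[dV fV] ->]; split; [apply: preimage_dsummand|apply: preimage_free].
split=> [i|_ /mapP[V /B[B0 BT] ->]].
  rewrite size_map => lt; rewrite !(nth_map set0) //; last exact: ltnW.
  exact: preimage_strict (S _ lt).
by rewrite -preimage_mx0 -preimage_mxT; split; apply: preimage_strict.
Qed.

Lemma act_simplex d σ : simplex d σ -> simplex d (act_flag g σ).
Proof.
case=> -[Fσ [t [[Ft st] sub]]] sσ; split; last by rewrite size_map.
split; first exact: act_is_flag.
exists (act_flag g t); do 2?split; rewrite ?size_map //; first exact: act_is_flag.
exact: map_subseq.
Qed.

End Invertible.
End FlagAction.

Section Chains.
Variables (R : comNzRingType) (n : nat) (K : fieldType).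
Implicit Types (σ τ : flag R n) (f c : flag R n -> K) (s : seq (flag R n)).

Definition bsum s c τ :=
  \sum_(σ <- s) \sum_(i < size σ) (if face i σ == τ then (-1) ^+ i * c σ else 0).

Lemma bsum_supported_eq s1 s2 c τ : uniq s1 -> uniq s2 ->
  supported c s1 -> supported c s2 -> bsum s1 c τ = bsum s2 c τ.
Proof.
have supp s : supported c s ->
    supported (fun σ => \sum_(i < size σ) (if face i σ == τ then (-1) ^+ i * c σ else 0)) s.
  apply: supported_sub => σ; apply: contra_neq => c0.
  by apply: big1 => i _; rewrite c0 mulr0 if_same.
by move=> u1 u2 /supp c1 /supp c2; apply: big_supported_eq.
Qed.

Lemma bsumD s c1 c2 τ : bsum s (fun σ => c1 σ + c2 σ) τ = bsum s c1 τ + bsum s c2 τ.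
Proof.
rewrite /bsum -big_split; apply: eq_bigr => σ _; rewrite -big_split.
by apply: eq_bigr => i _; case: (face i σ == τ); rewrite /= ?mulrDr ?addr0.
Qed.

Lemma bsumZ s a c τ : bsum s (fun σ => a * c σ) τ = a * bsum s c τ.
Proof.
rewrite /bsum mulr_sumr; apply: eq_bigr => σ _; rewrite mulr_sumr.
by apply: eq_bigr => i _; case: (face i σ == τ); rewrite ?mulr0 // mulrCA.
Qed.

Lemma bsum_act g h s f τ : g *m h = 1%:M -> h *m g = 1%:M ->
  bsum (map (act_flag h) s) (fun σ => f (act_flag g σ)) τ = bsum s f (act_flag g τ).
Proof.
move=> gh hg; rewrite /bsum big_map; apply: eq_bigr => ρ _.
rewrite size_map (act_flagK hg); apply: eq_bigr => i _.
suff -> : (face i (act_flag h ρ) == τ) = (face i ρ == act_flag g τ) by [].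
by rewrite face_act; apply/eqP/eqP => [<-|->]; rewrite ?(act_flagK hg) ?(act_flagK gh).
Qed.

Lemma supported_act g h s f : g *m h = 1%:M ->
  supported f s -> supported (fun σ => f (act_flag g σ)) (map (act_flag h) s).
Proof. by move=> gh fs σ /fs fgσ; apply/mapP; exists (act_flag g σ); rewrite ?act_flagK. Qed.

Lemma boundary_is_bsum c f s : boundary_is c f -> uniq s -> supported c s ->
  forall τ, f τ = bsum s c τ.
Proof.
by case=> s0 [u0 [c0 E]] u cs τ; rewrite E; apply: bsum_supported_eq.
Qed.

Lemma chainD d c1 c2 : chain d c1 -> chain d c2 -> chain d (fun σ => c1 σ + c2 σ).
Proof.
move=> [[s1 cs1] S1] [[s2 cs2] S2]; split=> [|σ].
  by exists (undup (s1 ++ s2)); apply: supportedD.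
by case: (eqVneq (c1 σ) 0) => [->|/S1//]; rewrite add0r; apply: S2.
Qed.

Lemma chainZ d a c : chain d c -> chain d (fun σ => a * c σ).
Proof.
have nz σ : a * c σ != 0 -> c σ != 0 by apply: contra_neq => ->; rewrite mulr0.
by move=> [[s cs] S]; split=> [|σ /nz/S//]; exists s => σ /nz/cs.
Qed.

Lemma cycle_supported d f : Defs.cycle d f -> exists2 s, uniq s & supported f s.
Proof. by case=> _ [s [u [cs _]]]; exists s. Qed.

Lemma cycle_bsum d f s : Defs.cycle d f -> uniq s -> supported f s ->
  forall τ, bsum s f τ = 0.
Proof. by case=> _ /boundary_is_bsum B u fs τ; rewrite -B. Qed.

Lemma cycle_intro d f s : chain d f -> uniq s -> supported f s ->
  (forall τ, bsum s f τ = 0) -> Defs.cycle d f.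
Proof.
by move=> Cf u fs B; split=> //; exists s; do 2!split=> //; move=> τ; rewrite -/(bsum s f τ) B.
Qed.

Lemma cycle0 d : Defs.cycle d (fun _ : flag R n => 0 : K).
Proof.
apply: (@cycle_intro _ _ [::]) => // [|σ|τ]; last by rewrite /bsum big_nil.
  by split; [exists [::]|] => σ; rewrite eqxx.
by rewrite eqxx.
Qed.

Lemma cycleD d f1 f2 : Defs.cycle d f1 -> Defs.cycle d f2 ->
  Defs.cycle d (fun σ => f1 σ + f2 σ).
Proof.
move=> C1 C2; have [s1 u1 fs1] := cycle_supported C1.
have [s2 u2 fs2] := cycle_supported C2.
apply: (cycle_intro _ (undup_uniq _) (supportedD fs1 fs2)) => [|τ].
  by apply: chainD; [case: C1|case: C2].
rewrite bsumD (cycle_bsum C1 (undup_uniq _) (supported_undup_catl _ fs1)).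
by rewrite (cycle_bsum C2 (undup_uniq _) (supported_undup_catr _ fs2)) addr0.
Qed.

Lemma cycleZ d a f : Defs.cycle d f -> Defs.cycle d (fun σ => a * f σ).
Proof.
move=> C; have [s u fs] := cycle_supported C.
have fs' : supported (fun σ => a * f σ) s.
  by apply: supported_sub fs => σ; apply: contra_neq => ->; rewrite mulr0.
apply: (cycle_intro _ u fs') => [|τ]; first by apply: chainZ; case: C.
by rewrite bsumZ (cycle_bsum C u fs) mulr0.
Qed.

Lemma cycleB d f1 f2 : Defs.cycle d f1 -> Defs.cycle d f2 ->
  Defs.cycle d (fun σ => f1 σ - f2 σ).
Proof.
move=> C1 /(cycleZ (-1)) C2; have := cycleD C1 C2.
by congr Defs.cycle; apply: funext => σ; rewrite mulN1r.
Qed.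

Lemma cycle_act d f g : GLn g -> Defs.cycle d f -> Defs.cycle d (fun σ => f (act_flag g σ)).
Proof.
case=> h [gh hg] C; have [s u fs] := cycle_supported C; case: (C) => -[_ S] _.
have fs' := supported_act gh fs; apply: (cycle_intro _ _ fs') => [||τ].
- split=> [|σ /S /(act_simplex hg gh)]; first by exists (map (act_flag h) s).
  by rewrite act_flagK.
- by rewrite map_inj_uniq //; apply: act_flag_inj hg.
by rewrite bsum_act // (cycle_bsum C u fs).
Qed.

Lemma simplex_size d σ : simplex d σ -> (d < n.-1)%N.
Proof. by case=> -[_ [t [[_ <-] sub]]] <-; apply: size_subseq. Qed.

Lemma bdry_top_eq0 f : bdry n.-2 f -> f = fun _ => 0.
Proof.
have no_simplex : ~~ (n.-2.+1 < n.-1)%N by case: n => [|[|k]] /=; rewrite ?ltnn.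
case=> c [[_ S] B]; apply: funext => τ.
have c0 : supported c [::] by move=> σ /S /simplex_size; rewrite (negbTE no_simplex).
by rewrite (boundary_is_bsum B _ c0) // /bsum big_nil.
Qed.

End Chains.

Section Coordinates.
Variables (R : comNzRingType) (N : nat).
Implicit Types (P Q : pred 'I_N).

Definition coord_subm P : subm R N := [set v | forall j, ~~ P j -> v 0 j = 0].
Definition erow (j : 'I_N) : 'rV[R]_N := delta_mx 0 j.

Lemma erowE j k : erow j 0 k = (j == k)%:R.
Proof. by rewrite mxE eqxx eq_sym. Qed.

Lemma erow_mul j (A : 'M[R]_N) k : (erow j *m A) 0 k = A j k.
Proof. by rewrite -rowE mxE. Qed.

Lemma erow_coord_subm j P : coord_subm P (erow j) <-> P j.
Proof.
split=> [E|Pj k nPk]; last by rewrite erowE; case: eqP nPk => // <-; rewrite Pj.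
by apply/negPn/negP => /E/eqP; rewrite erowE eqxx oner_eq0.
Qed.

Lemma coord_subm_sub P Q : {subset P <= Q} -> coord_subm P `<=` coord_subm Q.
Proof. by move=> PQ v Pv j nQj; apply: Pv; apply: contra nQj; apply: PQ. Qed.

Lemma coord_subm_inj P Q : coord_subm P = coord_subm Q -> P =1 Q.
Proof.
move=> E j; apply/idP/idP => H.
  by have := (erow_coord_subm j P).2 H; rewrite E => /erow_coord_subm.
by have := (erow_coord_subm j Q).2 H; rewrite -E => /erow_coord_subm.
Qed.

Lemma coord_subm_strict P Q j : {subset P <= Q} -> Q j -> ~~ P j ->
  strict_sub (coord_subm P) (coord_subm Q).
Proof.
move=> PQ Qj nPj; split; first exact: coord_subm_sub.
by move/coord_subm_inj/(_ j); rewrite Qj (negbTE nPj).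
Qed.

Lemma coord_subm0 P : P =1 pred0 -> coord_subm P = [set 0].
Proof.
move=> P0; apply/seteqP; split=> v /=; last by move-> => j _; rewrite mxE.
by move=> E; apply/rowP => j; rewrite mxE; apply: E; rewrite P0.
Qed.

Lemma coord_submT P : P =1 predT -> coord_subm P = setT.
Proof. by move=> PT; apply/seteqP; split=> v //= _ j; rewrite PT. Qed.

Lemma coord_subm_submod P : is_submod (coord_subm P).
Proof.
split; first by move=> j _; rewrite mxE.
split=> [u v Pu Pv|a v Pv] j nPj; rewrite mxE.
  by rewrite Pu ?Pv ?addr0.
by rewrite Pv ?mulr0.
Qed.

Lemma coord_subm_dsummand P : is_dsummand (coord_subm P).
Proof.
split; first exact: coord_subm_submod.
exists (coord_subm (predC P)); split; first exact: coord_subm_submod.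
split=> [v Pv Cv|v].
  by apply/rowP => j; rewrite mxE; case: (boolP (P j)) => Pj; [apply: Cv; rewrite /= Pj|apply: Pv].
exists (\row_j (if P j then v 0 j else 0)), (\row_j (if P j then 0 else v 0 j)).
split; first by move=> j /negbTE nPj; rewrite mxE nPj.
split; first by move=> j /=; rewrite negbK mxE => ->.
by apply/rowP => j; rewrite !mxE; case: (P j); rewrite ?addr0 ?add0r.
Qed.

Lemma coord_subm_free P : is_free (coord_subm P).
Proof.
pose b : 'M[R]_(#|P|, N) := \matrix_(i, j) (enum_val i == j)%:R.
have mulb (u : 'rV[R]_#|P|) j : (u *m b) 0 j = \sum_(i | enum_val i == j) u 0 i.
  rewrite mxE [RHS]big_mkcond /=; apply: eq_bigr => i _; rewrite mxE.
  by case: (enum_val i == j); rewrite ?mulr1 ?mulr0.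
have mulb_val (u : 'rV[R]_#|P|) i : (u *m b) 0 (enum_val i) = u 0 i.
  by rewrite mulb (big_pred1 i) // => i'; apply/eqP/eqP => [/enum_val_inj|->].
have mulb_out (u : 'rV[R]_#|P|) j : ~~ P j -> (u *m b) 0 j = 0.
  move=> nPj; rewrite mulb big_pred0 // => i; apply/negbTE.
  by apply: contraNneq nPj => <-; apply: enum_valP.
exists #|P|, b; split=> [v|u E]; last by apply/rowP => i; rewrite -mulb_val E !mxE.
split=> [Pv|[u ->] j]; last exact: mulb_out.
exists (\row_i v 0 (enum_val i)); apply/rowP => j.
case: (boolP (P j)) => Pj; last by rewrite mulb_out // Pv.
by rewrite -(enum_rankK_in Pj Pj) mulb_val mxE.
Qed.

End Coordinates.

Section CoordinateFlags.
Variables (R : comNzRingType) (m : nat).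
Local Notation N := m.+2.
Implicit Types (w : {perm 'I_N}).

(* [coord_flag w] is the complete flag <e_a0> < <e_a0, e_a1> < ... of the
   standard apartment, where a = w^-1. *)
Definition perm_prefix w k : pred 'I_N := fun j => (w j < k)%N.
Definition coord_flag w : flag R N :=
  mkseq (fun k => coord_subm (R := R) (perm_prefix w k.+1)) m.+1.

Lemma size_coord_flag w : size (coord_flag w) = m.+1.
Proof. exact: size_mkseq. Qed.

Lemma nth_coord_flag w k : (k < m.+1)%N ->
  nth set0 (coord_flag w) k = coord_subm (R := R) (perm_prefix w k.+1).
Proof. exact: nth_mkseq. Qed.

Lemma perm_val_surj w k : (k < N)%N -> exists j, val (w j) = k.
Proof. by move=> lt; exists ((w^-1)%g (Ordinal lt)); rewrite permKV. Qed.

Lemma coord_subm_prefix_strict w k l : (k < l <= N)%N ->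
  strict_sub (coord_subm (R := R) (perm_prefix w k)) (coord_subm (R := R) (perm_prefix w l)).
Proof.
case/andP=> kl lN; have [j wj] := perm_val_surj w (leq_trans kl lN).
apply: (@coord_subm_strict R N _ _ j); rewrite /perm_prefix /= ?wj ?ltnn //.
by move=> i; rewrite /perm_prefix /= => /ltn_trans; apply.
Qed.

Lemma coord_flag_is_flag w : is_flag (coord_flag w).
Proof.
split.
  move=> V /mapP[k _ ->]; split; [exact: coord_subm_dsummand|exact: coord_subm_free].
split=> [i|V /mapP[k]]; first rewrite size_coord_flag => lt.
  by rewrite !nth_coord_flag ?(ltnW lt) //; apply: coord_subm_prefix_strict; lia.
rewrite mem_iota => /andP[_ lt] ->.
rewrite -(@coord_subm0 R N (perm_prefix w 0)) // -(@coord_submT R N (perm_prefix w N)).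
  by split; apply: coord_subm_prefix_strict; lia.
by move=> j; rewrite /perm_prefix /= ltn_ord.
Qed.

Lemma coord_flag_simplex w : simplex m (coord_flag w).
Proof.
have F := coord_flag_is_flag w; split; last exact: size_coord_flag.
by split=> //; exists (coord_flag w); do 2?split; rewrite ?size_coord_flag.
Qed.

Lemma coord_flag_inj : injective coord_flag.
Proof.
move=> w w' E; apply/permP => j; apply/val_inj/eqP.
have prefixE k : (k < m.+1)%N -> perm_prefix w k.+1 =1 perm_prefix w' k.+1.
  by move=> lt; apply: (@coord_subm_inj R N); rewrite -!nth_coord_flag // E.
have le (a b : {perm 'I_N}) :
    (forall k, (k < m.+1)%N -> perm_prefix a k.+1 =1 perm_prefix b k.+1) -> (b j <= a j)%N.
  move=> ab; case: (ltnP (a j) m.+1) => [lt|ge].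
    by have := ab _ lt j; rewrite /perm_prefix ltnSn => /esym.
  by rewrite -ltnS (leq_trans (ltn_ord _)) // ltnS.
by rewrite eqn_leq !le // => k lt i; rewrite prefixE.
Qed.

End CoordinateFlags.

Arguments coord_flag {R m} w.

Section Apartment.
Variables (R : comNzRingType) (m : nat) (K : fieldType).
Local Notation N := m.+2.
Implicit Types (w : {perm 'I_N}) (σ : flag R N).

Definition coord_flags : seq (flag R N) := map coord_flag (index_enum {perm 'I_N}).

Lemma uniq_coord_flags : uniq coord_flags.
Proof. by rewrite map_inj_uniq ?index_enum_uniq //; apply: coord_flag_inj. Qed.

Lemma coord_flagsP w : coord_flag w \in coord_flags.
Proof. by apply: map_f; rewrite mem_index_enum. Qed.

Definition perm_sign w : K := (-1) ^+ odd_perm w.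

Definition apartment σ : K :=
  \sum_(w : {perm 'I_N}) (if σ == coord_flag w then perm_sign w else 0).

Lemma apartment_coord_flag w : apartment (coord_flag w) = perm_sign w.
Proof.
rewrite /apartment (bigD1 w) //= eqxx big1 ?addr0 // => w' w'w.
by case: eqP => // /coord_flag_inj wE; rewrite wE eqxx in w'w.
Qed.

Lemma apartment_supported : supported apartment coord_flags.
Proof.
move=> σ; apply: contraNT => σN; apply/eqP/big1 => w _.
by case: eqP => // σE; rewrite σE coord_flagsP in σN.
Qed.

Definition adj_swap (i : nat) : {perm 'I_N} := tperm (inord i) (inord i.+1).

Lemma adj_swap_neq i : (i < m.+1)%N -> (inord i : 'I_N) != inord i.+1.
Proof. by move=> lt; apply/eqP => /(congr1 val); rewrite /= !inordK //; lia. Qed.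

Lemma odd_adj_swap i : (i < m.+1)%N -> odd_perm (adj_swap i).
Proof. by move=> lt; rewrite odd_tperm adj_swap_neq. Qed.

(* Swapping the positions i and i+1 only changes the (i+1)-st prefix, that
   is the i-th term of the coordinate flag. *)
Lemma face_coord_flag_swap w i : (i < m.+1)%N ->
  face i (coord_flag (w * adj_swap i)%g) = face i (coord_flag w : flag R N).
Proof.
move=> lt; rewrite /face; apply: (@eq_take_drop_succ _ set0) => [|k ki].
  by rewrite !size_coord_flag.
case: (ltnP k m.+1) => km; last by rewrite !nth_default ?size_coord_flag.
rewrite !nth_coord_flag //; congr coord_subm; apply: funext => j.
rewrite /perm_prefix permM; case: tpermP => [->|->|//]; rewrite !inordK //.
all: by apply/idP/idP; lia.
Qed.

Lemma apartment_cycle : Defs.cycle m apartment.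
Proof.
apply: (cycle_intro _ uniq_coord_flags apartment_supported) => [|τ].
  split; first by exists coord_flags; apply: apartment_supported.
  by move=> σ /apartment_supported/mapP[w _ ->]; apply: coord_flag_simplex.
rewrite /bsum big_map; under eq_bigr => w _ do rewrite size_coord_flag apartment_coord_flag.
rewrite exchange_big /= big1 // => i _.
set G := fun w => if face i (coord_flag w) == τ then (-1) ^+ i * perm_sign w else 0.
have Gswap w : G (w * adj_swap i)%g = - G w.
  rewrite /G face_coord_flag_swap //; case: ifP => _; rewrite ?oppr0 //.
  by rewrite /perm_sign odd_permM odd_adj_swap // addbT signrN mulrN.
rewrite -/(\sum_(w <- index_enum _) G w) (bigID (fun w => odd_perm w)) /=.
rewrite (reindex_inj (mulIg (adj_swap i))) /=.
rewrite (eq_big (fun w => ~~ odd_perm w) (fun w => - G w)) => [|w|w _].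
- by rewrite sumrN addNr.
- by rewrite odd_permM odd_adj_swap // addbT.
- exact: Gswap.
Qed.

End Apartment.

Section CongruenceSubgroup.
Variables (R : comNzRingType) (n : nat) (x : R).
Implicit Types (σ τ ρ : flag R n) (a b γ g h M : 'M[R]_n).

Definition congruence γ := GLn γ /\ exists M, γ = 1%:M + x *: M.
Definition congruent σ τ := exists2 γ, congruence γ & τ = act_flag γ σ.

Lemma GLnM a b : GLn a -> GLn b -> GLn (a *m b).
Proof.
case=> a' [aa' a'a] [b' [bb' b'b]]; exists (b' *m a'); split.
  by rewrite mulmxA -(mulmxA a) bb' mulmx1 aa'.
by rewrite mulmxA -(mulmxA b') a'a mulmx1 b'b.
Qed.

Lemma congruence1 : congruence 1%:M.
Proof. by split; [exists 1%:M; rewrite mulmx1|exists 0; rewrite scaler0 addr0]. Qed.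

Lemma congruenceM a b : congruence a -> congruence b -> congruence (a *m b).
Proof.
rewrite /congruence => -[Ga [A EA]] [Gb [B EB]]; split; first exact: GLnM.
exists (A + B + x *: (A *m B)); rewrite EA EB.
rewrite mulmxDl !mulmxDr !mul1mx mulmx1 -!scalemxAl -!scalemxAr scalerA !scalerDr scalerA.
by rewrite !addrA; congr (_ + _); rewrite -!addrA; congr (_ + _); rewrite addrC.
Qed.

Lemma congruenceV γ : congruence γ ->
  exists2 γ', congruence γ' & γ *m γ' = 1%:M /\ γ' *m γ = 1%:M.
Proof.
rewrite /congruence => -[[h [γh hγ]] [M EM]]; exists h => //; split; first by exists γ.
exists (- (h *m M)); have : h *m γ = h + x *: (h *m M) by rewrite EM mulmxDr mulmx1 scalemxAr.
by rewrite hγ => ->; rewrite scalerN addrK.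
Qed.

Lemma congruence_conj g h γ : g *m h = 1%:M -> h *m g = 1%:M ->
  congruence γ -> congruence (h *m γ *m g).
Proof.
rewrite /congruence => gh hg [Gγ [M EM]].
split; first by apply: GLnM; [apply: GLnM => //; exists g|exists h].
by exists (h *m M *m g); rewrite EM mulmxDr mulmx1 mulmxDl hg -scalemxAr -scalemxAl.
Qed.

Lemma congruent_refl σ : congruent σ σ.
Proof. by exists 1%:M; rewrite ?act_flag1 //; apply: congruence1. Qed.

Lemma congruent_sym σ τ : congruent σ τ -> congruent τ σ.
Proof.
case=> γ Cγ ->; have [γ' Cγ' [γγ' _]] := congruenceV Cγ.
by exists γ'; rewrite // act_flagM γγ' act_flag1.
Qed.

Lemma congruent_trans σ τ ρ : congruent σ τ -> congruent τ ρ -> congruent σ ρ.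
Proof. by case=> a Ca -> [b Cb ->]; exists (a *m b); rewrite ?act_flagM //; apply: congruenceM. Qed.

Lemma congruent_act g h σ τ : g *m h = 1%:M -> h *m g = 1%:M ->
  congruent σ τ -> congruent (act_flag g σ) (act_flag g τ).
Proof.
move=> gh hg [γ Cγ ->]; exists (h *m γ *m g); first exact: congruence_conj.
by rewrite !act_flagM !mulmxA gh mul1mx.
Qed.

Hypothesis x_nonunit : ~ exists y, x * y = 1.

(* The diagonal entries 1 + x M_jj of a congruence matrix are nonzero, so the
   image of the coordinate vector e_j keeps a nonzero j-th coordinate. *)
Lemma congruence_coord_subm γ (P Q : pred 'I_n) : congruence γ ->
  [set v *m γ | v in coord_subm (R := R) P] = coord_subm Q -> {subset P <= Q}.
Proof.
rewrite /congruence => -[_ [M EM]] E j Pj; have : coord_subm Q (erow R j *m γ).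
  by rewrite -E; exists (erow R j) => //; apply/erow_coord_subm.
move=> Qγ; apply/negPn/negP => /Qγ; rewrite erow_mul EM !mxE eqxx mulr1n => E0.
apply: x_nonunit; exists (- M j j); rewrite mulrN.
by apply/eqP; rewrite eqr_oppLR -addr_eq0 addrC E0.
Qed.

End CongruenceSubgroup.

Section OrbitNullCycles.
Variables (R : comNzRingType) (m : nat) (K : fieldType) (x : R).
Local Notation N := m.+2.
Implicit Types (σ τ : flag R N) (f : flag R N -> K) (s : seq (flag R N)).

Definition orbit_sum s f τ := \sum_(σ <- s | `[< congruent x σ τ >]) f σ.

(* Orbit sums are taken over an arbitrary duplicate-free list containing the
   support; for cycles they do not depend on that choice. *)
Definition orbit_null : set (flag R N -> K) := fun f =>
  Defs.cycle m f /\ forall τ s, uniq s -> supported f s -> orbit_sum s f τ = 0.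

Lemma orbit_null_intro f s : Defs.cycle m f -> uniq s -> supported f s ->
  (forall τ, orbit_sum s f τ = 0) -> orbit_null f.
Proof.
move=> Cf u fs O; split=> // τ s' u' fs'.
by rewrite /orbit_sum (big_supported_eq _ u' u fs' fs) -/(orbit_sum s f τ) O.
Qed.

Lemma orbit_sum_act g h : g *m h = 1%:M -> h *m g = 1%:M -> forall s f τ,
  orbit_sum s (fun σ => f (act_flag g σ)) τ = orbit_sum (map (act_flag g) s) f (act_flag g τ).
Proof.
move=> gh hg s f τ; rewrite /orbit_sum big_map; apply: eq_bigl => σ.
apply: asbool_equiv_eq; split; first by move=> H; apply: (congruent_act gh hg H).
by move/(congruent_act hg gh); rewrite !act_flagK.
Qed.

Lemma orbit_null_ksubspace : ksubspace orbit_null.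
Proof.
split.
  apply: (orbit_null_intro (s := [::])) => // [|σ|τ]; first exact: cycle0.
    by rewrite eqxx.
  by rewrite /orbit_sum big_nil.
split=> [f g [Cf Of] [Cg Og]|a f [Cf Of]].
  have [sf uf fsf] := cycle_supported Cf; have [sg ug fsg] := cycle_supported Cg.
  have fs := supported_undup_catl sg fsf; have gs := supported_undup_catr sf fsg.
  apply: (orbit_null_intro (cycleD Cf Cg) (undup_uniq _) (supportedD fsf fsg)) => τ.
  by rewrite /orbit_sum big_split /= -!/(orbit_sum _ _ τ) Of ?Og ?undup_uniq ?addr0.
have [s u fs] := cycle_supported Cf.
apply: (orbit_null_intro (cycleZ a Cf) u) => [|τ].
  by apply: supported_sub fs => σ; apply: contra_neq => ->; rewrite mulr0.
by rewrite /orbit_sum -mulr_sumr -/(orbit_sum _ _ τ) Of ?mulr0.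
Qed.

Lemma orbit_null_invariant : Defs.invariant orbit_null.
Proof.
move=> g f Gg [Cf Of]; have [s u fs] := cycle_supported Cf; case: (Gg) => h [gh hg].
apply: (orbit_null_intro (cycle_act Gg Cf) _ (supported_act gh fs)) => [|τ].
  by rewrite map_inj_uniq //; apply: act_flag_inj hg.
by rewrite (orbit_sum_act gh hg) -map_comp (eq_map (act_flagK hg)) map_id Of.
Qed.

Lemma orbit_null_bdry f : bdry m f -> orbit_null f.
Proof. by move/bdry_top_eq0->; case: orbit_null_ksubspace. Qed.

(* Translation by a congruence matrix permutes the terms of each orbit sum. *)
Lemma orbit_null_sub_translate f γ : Defs.cycle m f -> congruence x γ ->
  orbit_null (fun σ => f σ - f (act_flag γ σ)).
Proof.
move=> Cf Cγ; have [γ' _ [γγ' γ'γ]] := congruenceV Cγ.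
have [sf uf fsf] := cycle_supported Cf; have fγs := supported_act γγ' fsf.
have Cfγ := cycle_act (proj1 Cγ) Cf.
apply: (orbit_null_intro (cycleB Cf Cfγ) (undup_uniq _) (supportedB fsf fγs)) => τ.
rewrite /orbit_sum big_split /= sumrN -!/(orbit_sum _ _ τ); apply/eqP; rewrite subr_eq0; apply/eqP.
set s := undup _; have τγ : congruent x τ (act_flag γ τ) by exists γ.
have us : uniq (map (act_flag γ) s).
  by rewrite map_inj_uniq ?undup_uniq //; apply: act_flag_inj γγ'.
have fs : supported f s := supported_undup_catl _ fsf.
have fγ : supported f (map (act_flag γ) s).
  move=> ρ /fsf ρs; apply/mapP; exists (act_flag γ' ρ); last by rewrite act_flagK.
  by rewrite mem_undup mem_cat map_f ?orbT.
rewrite (orbit_sum_act γγ' γ'γ) /orbit_sum (big_supported_eq _ (undup_uniq _) us fs fγ).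
apply: eq_bigl => ρ; apply: asbool_equiv_eq; split=> C; first exact: congruent_trans C τγ.
exact: congruent_trans C (congruent_sym τγ).
Qed.

Hypothesis x_nonunit : ~ exists y, x * y = 1.

Lemma congruent_coord_flag w w' :
  congruent x (coord_flag w) (coord_flag w') -> w = w' :> {perm 'I_N}.
Proof.
have sub (a b : {perm 'I_N}) k : congruent x (coord_flag a) (coord_flag b : flag R N) ->
    (k < m.+1)%N -> {subset perm_prefix a k.+1 <= perm_prefix b k.+1}.
  case=> γ Cγ E lt; apply: (congruence_coord_subm x_nonunit Cγ).
  by rewrite -!nth_coord_flag // E /act_flag (nth_map set0) // size_coord_flag.
move=> C; apply: (@coord_flag_inj R); apply: (@eq_from_nth _ set0) => [|k].
  by rewrite !size_coord_flag.
rewrite size_coord_flag => lt; rewrite !nth_coord_flag //; congr coord_subm.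
by apply: funext => j; apply/idP/idP => [|/(sub _ _ _ (congruent_sym C) lt j)//]; apply: sub C lt j.
Qed.

Lemma apartment_not_orbit_null : ~ orbit_null (@apartment R m K).
Proof.
case=> _ /(_ (coord_flag 1) _ (uniq_coord_flags R m) (@apartment_supported R m K)).
rewrite /orbit_sum big_map (big_pred1 1%g) ?apartment_coord_flag.
  by rewrite /perm_sign odd_perm1 => /eqP; rewrite oner_eq0.
by move=> w; apply/asboolP/eqP => [/congruent_coord_flag|->] //; apply: congruent_refl.
Qed.

End OrbitNullCycles.

Section Transvection.
Variables (R : comNzRingType) (m : nat) (K : fieldType).
Local Notation N := m.+2.

Definition transvection (a : R) : 'M[R]_N := 1%:M + a *: delta_mx ord0 (inord 1).

Lemma transvectionD a b : transvection a *m transvection b = transvection (a + b).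
Proof.
have E2 : (delta_mx ord0 (inord 1) : 'M[R]_N) *m delta_mx ord0 (inord 1) = 0 :> 'M[R]_N.
  by apply: mul_delta_mx_0; apply/eqP => /(congr1 val); rewrite /= inordK.
rewrite /transvection mulmxDl !mulmxDr !mul1mx mulmx1 -scalemxAl -scalemxAr E2.
by rewrite !scaler0 addr0 scalerDl (addrC (a *: _)) addrA.
Qed.

Lemma transvection0 : transvection 0 = 1%:M.
Proof. by rewrite /transvection scale0r addr0. Qed.

Lemma transvectionK a : transvection a *m transvection (- a) = 1%:M.
Proof. by rewrite transvectionD subrr transvection0. Qed.

Lemma transvectionKV a : transvection (- a) *m transvection a = 1%:M.
Proof. by rewrite transvectionD addNr transvection0. Qed.

Lemma congruence_transvection x : congruence x (transvection x).
Proof.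
split; last by exists (delta_mx ord0 (inord 1)).
by exists (transvection (- x)); rewrite transvectionK transvectionKV.
Qed.

Variable x : R.
Hypothesis x_neq0 : x != 0.

(* The first term of the transvected standard flag is the line spanned by
   e_0 + x e_1, which is not a coordinate line since x != 0. *)
Lemma apartment_transvection : apartment K (act_flag (transvection x) (coord_flag 1)) = 0.
Proof.
apply: big1 => w _; case: eqP => // /(congr1 (fun σ => nth set0 σ 0)) /= E.
have e0t : coord_subm (perm_prefix w 1) (erow R ord0 *m transvection x).
  by rewrite -E; exists (erow R ord0) => //; apply/erow_coord_subm; rewrite /perm_prefix perm1.
have in_prefix j : (erow R ord0 *m transvection x) 0 j != 0 -> perm_prefix w 1 j.
  by move=> nz; apply/negPn/negP => /e0t; apply/eqP.
have /in_prefix : (erow R ord0 *m transvection x) 0 ord0 != 0.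
  rewrite erow_mul !mxE eqxx /= mulr1n.
  suff -> : (ord0 == inord 1 :> 'I_N) = false by rewrite mulr0 addr0 oner_neq0.
  by apply/eqP => /(congr1 val); rewrite /= inordK.
have /in_prefix : (erow R ord0 *m transvection x) 0 (inord 1) != 0.
  rewrite erow_mul !mxE eqxx /= eqxx mulr1.
  suff -> : (ord0 == inord 1 :> 'I_N) = false by rewrite add0r.
  by apply/eqP => /(congr1 val); rewrite /= inordK.
rewrite /perm_prefix !ltnS !leqn0 => /eqP w1 /eqP w0.
have /perm_inj : w 0 = w (inord 1) by apply: val_inj; rewrite /= w0 w1.
by move/(congr1 val); rewrite /= inordK.
Qed.

End Transvection.

Theorem mainTheorem19 (R : comNzRingType) (n : nat) (K : fieldType) :
  not_field R -> (2 <= n)%N -> ~ steinberg_irreducible R n K.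
Proof.
case=> x [x_neq0 x_nonunit]; case: n => [|[|m]] // _ [_ irreducible].
have Capt := apartment_cycle R m K.
have [W0|Wall] := irreducible (orbit_null x) (orbit_null_ksubspace m K x)
  (@orbit_null_invariant R m K x) (@orbit_null_bdry R m K x) (fun f Wf => Wf.1).
  have := W0 _ (orbit_null_sub_translate Capt (congruence_transvection m x)).
  move/bdry_top_eq0/(congr1 (fun f => f (coord_flag 1))) => /=.
  rewrite apartment_transvection // subr0 apartment_coord_flag /perm_sign odd_perm1.
  by move/eqP; rewrite oner_eq0.
exact: apartment_not_orbit_null x_nonunit (Wall _ Capt).
Qed.
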